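(* Let $G$ be a finite group, $k$ a field of characteristic $p$ dividing $|G|$. The constant presheaf $\underline{k^{\times}}$ on $\mathcal{O}(G)$ is a sheaf on the site $(\mathcal{O}(G),\mathcal{J}_{\rm sipp})$.
   Context: $\mathcal{O}(G)$ is the category of orbits $G/H$ ($H\le G$) and $G$-maps. $k^\times$ is the multiplicative group of $k$, and $\underline{k^\times}$ the constant presheaf with all restriction maps the identity. A sieve on $x$ is a set of morphisms with codomain $x$ closed under precomposition. $\mathcal{J}_{\rm sipp}$: a sieve on $G/H$ is covering iff it contains the projection $G/P_H\to G/H$, $gP_H\mapsto gH$, for a Sylow $p$-subgroup $P_H$ of $H$. A presheaf $\mathfrak{F}$ is a sheaf if for every covering sieve $S$ on $x$ the restriction map $\mathrm{Nat}(\mathrm{Hom}(-,x),\mathfrak{F})\to\mathrm{Nat}(S,\mathfrak{F})$ is bijective. *)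

From HB Require Import structures.
From mathcomp Require Import all_boot all_algebra all_fingroup all_solvable.

Set Implicit Arguments.
Unset Strict Implicit.
Unset Printing Implicit Defensive.

Local Open Scope group_scope.

(* Orbit category O(G): the object G/H (H a subgroup of G) is the set of left
   cosets [lcosets H G] = {x *: H | x in G}.  A morphism G/H -> G/K is a G-map,
   represented canonically as a finite function on {set gT} that is a
   G-equivariant map lcosets H G -> lcosets K G and sends every other set to
   set0 (so that equality of morphisms is equality of the maps on G/H). *)
Definition morph (gT : finGroupType) := {ffun {set gT} -> {set gT}}.

Definition is_Gmap (gT : finGroupType) (G H K : {set gT}) (f : morph gT) : Prop :=
  [/\ forall C, C \notin lcosets H G -> f C = set0,
      forall C, C \in lcosets H G -> f C \in lcosets K G &
      forall g C, g \in G -> C \in lcosets H G -> f (g *: C) = g *: f C].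

Definition mcomp (gT : finGroupType) (f u : morph gT) : morph gT :=
  [ffun C => f (u C)].

(* presheaves of sets on O(G) (only the data needed for the sheaf condition) *)
Record presheaf (gT : finGroupType) := Presheaf {
  psh_ob : {group gT} -> Type;
  psh_mor : forall H K : {group gT}, morph gT -> psh_ob K -> psh_ob H }.

Definition const_psh (gT : finGroupType) (A : Type) : presheaf gT :=
  @Presheaf gT (fun _ => A) (fun _ _ _ a => a).

Definition kunits (k : fieldType) := {x : k | x != 0%R}.

(* A sieve on x = G/X: a set of morphisms with codomain x closed under
   precomposition.  S y f means the morphism f : G/y -> G/X is in S. *)
Definition sieve (gT : finGroupType) (G X : {group gT})
    (S : {group gT} -> morph gT -> Prop) : Prop :=
  (forall (y : {group gT}) f, S y f -> y \subset G /\ is_Gmap G y X f) /\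
  (forall (y z : {group gT}) f u, S y f -> z \subset G -> is_Gmap G z y u ->
      S z (mcomp f u)).

(* the maximal sieve = the representable functor Hom(-, x) *)
Definition maxsieve (gT : finGroupType) (G X : {group gT}) :
    {group gT} -> morph gT -> Prop :=
  fun y f => y \subset G /\ is_Gmap G y X f.

Definition natS (gT : finGroupType) (G : {group gT}) (F : presheaf gT)
    (S : {group gT} -> morph gT -> Prop)
    (alpha : forall y : {group gT}, morph gT -> psh_ob F y) : Prop :=
  forall (y z : {group gT}) f u, S y f -> z \subset G -> is_Gmap G z y u ->
    alpha z (mcomp f u) = @psh_mor gT F z y u (alpha y f).

(* restriction Nat(Hom(-,x),F) -> Nat(S,F) is bijective (natural
   transformations being equal iff they agree on every morphism of the
   domain sieve) *)
Definition sheaf_cond (gT : finGroupType) (G X : {group gT}) (F : presheaf gT)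
    (S : {group gT} -> morph gT -> Prop) : Prop :=
  (forall alpha beta, @natS gT G F (maxsieve G X) alpha -> @natS gT G F (maxsieve G X) beta ->
     (forall y f, S y f -> alpha y f = beta y f) ->
     forall y f, maxsieve G X y f -> alpha y f = beta y f) /\
  (forall beta, @natS gT G F S beta ->
     exists alpha, @natS gT G F (maxsieve G X) alpha /\
       forall y f, S y f -> alpha y f = beta y f).

Definition sipp_proj (gT : finGroupType) (G P H : {set gT}) : morph gT :=
  [ffun C => if C \in lcosets P G then C * H else set0].

Definition Jsipp (gT : finGroupType) (p : nat) (G X : {group gT})
    (S : {group gT} -> morph gT -> Prop) : Prop :=
  exists P : {group gT}, P \in 'Syl_p(X) /\ S P (sipp_proj G P X).

Definition is_sheaf_sipp (gT : finGroupType) (p : nat) (G : {group gT})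
    (F : presheaf gT) : Prop :=
  forall X : {group gT}, X \subset G ->
  forall S, sieve G X S -> Jsipp p G X S -> @sheaf_cond gT G X F S.

From HB Require Import structures.
From mathcomp Require Import all_boot all_algebra all_fingroup all_solvable.

(* Every G-map f : G/H -> G/X factors the canonical projection G/1 -> G/X:
   if f(H) = aX then precomposing f with G/1 -> G/H, x |-> x a^-1 H, gives
   x |-> xX.  A natural transformation from a sieve S to a constant presheaf
   is invariant under precomposition, so it takes at every member of S its
   value at that projection.  Hence a constant presheaf satisfies the sheaf
   condition for every nonempty sieve; the Sylow subgroup and the
   characteristic of k only serve to make J_sipp-covering sieves nonempty. *)

Set Implicit Arguments.
Unset Strict Implicit.
Unset Printing Implicit Defensive.
Local Open Scope group_scope.

Section ConstantPresheaf.
Variables (gT : finGroupType) (G : {group gT}).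

Lemma set0_notin_lcosets (H : {group gT}) : set0 \notin lcosets H G.
Proof.
apply/negP => /lcosetsP [a _ Ha].
by have := lcoset_refl H a; rewrite -Ha inE.
Qed.

Lemma lcoset_in_lcosets (H : {group gT}) g C :
  g \in G -> C \in lcosets H G -> g *: C \in lcosets H G.
Proof.
move=> Gg /lcosetsP [x Gx ->]; apply/lcosetsP.
by exists (g * x); rewrite ?groupM ?lcosetM.
Qed.

(* [sipp_proj G 1 (c *: H)] is the G-map G/1 -> G/H, x |-> x c H. *)
Lemma sipp_proj1_Gmap (H : {group gT}) c :
  c \in G -> is_Gmap G [1 gT] H (sipp_proj G [1 gT] (c *: H)).
Proof.
move=> Gc; split=> [C /negbTE C1 | C C1 | g C Gg C1].
- by rewrite ffunE C1.
- rewrite ffunE C1; case/lcosetsP: C1 => x Gx ->.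
  by rewrite mulg1 -lcosetM; apply/lcosetsP; exists (x * c); rewrite ?groupM.
- rewrite !ffunE C1 lcoset_in_lcosets //.
  exact/esym/set_mulgA.
Qed.

Lemma Gmap_factors_sipp_proj1 (H X : {group gT}) f :
  is_Gmap G H X f ->
  exists2 c, c \in G & mcomp f (sipp_proj G [1 gT] (c *: H)) =
                       sipp_proj G [1 gT] X.
Proof.
move=> [f0 fH fG].
have H_H : (H : {set gT}) \in lcosets H G.
  by apply/lcosetsP; exists 1; rewrite ?group1 ?lcoset1.
case/lcosetsP: (fH _ H_H) => a Ga fHE.
exists a^-1; first by rewrite groupV.
apply/ffunP => C; rewrite !ffunE.
case C1: (C \in lcosets [1 gT] G); last by rewrite f0 // set0_notin_lcosets.
case/lcosetsP: C1 => x Gx ->.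
by rewrite !mulg1 -lcosetM fG ?groupM ?groupV // fHE -!lcosetM mulgKV.
Qed.

Lemma natS_const_psh_sipp_proj1 (A : Type) (X : {group gT}) S beta
    (H : {group gT}) f :
  @natS gT G (const_psh gT A) S beta -> S H f -> is_Gmap G H X f ->
  beta H f = beta [1 gT]%G (sipp_proj G [1 gT] X).
Proof.
move=> natb Sf fGmap.
have [c Gc <-] := Gmap_factors_sipp_proj1 fGmap.
by rewrite (natb _ _ _ _ Sf (sub1G G) (sipp_proj1_Gmap H Gc)).
Qed.

Lemma const_psh_sheaf_cond (A : Type) (X : {group gT}) S :
  sieve G X S -> (exists H f, S H f) -> sheaf_cond G X (const_psh gT A) S.
Proof.
move=> [S_Gmap _] [H0 [f0 Sf0]].
have [sH0G f0Gmap] := S_Gmap _ _ Sf0.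
have maxsieve_proj1 gamma H f :
    @natS gT G (const_psh gT A) (maxsieve G X) gamma -> maxsieve G X H f ->
  gamma H f = gamma [1 gT]%G (sipp_proj G [1 gT] X).
  move=> natg [sHG fGmap].
  exact: natS_const_psh_sipp_proj1 natg (conj sHG fGmap) fGmap.
split=> [alpha beta nata natb agree H f Xf | beta natb].
  rewrite (maxsieve_proj1 _ _ _ nata Xf) (maxsieve_proj1 _ _ _ natb Xf).
  rewrite -(maxsieve_proj1 _ _ _ nata (conj sH0G f0Gmap)).
  rewrite -(maxsieve_proj1 _ _ _ natb (conj sH0G f0Gmap)).
  exact: agree Sf0.
exists (fun _ _ => beta [1 gT]%G (sipp_proj G [1 gT] X)); split=> // H f Sf.
have [_ fGmap] := S_Gmap _ _ Sf.
by rewrite (natS_const_psh_sipp_proj1 natb Sf fGmap).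
Qed.

End ConstantPresheaf.

Theorem proposition4p2p1 (gT : finGroupType) (G : {group gT}) (k : fieldType)
    (p : nat) :
  p \in [pchar k]%R -> p %| #|G| ->
  is_sheaf_sipp p G (const_psh gT (kunits k)).
Proof.
move=> _ _ X _ S sieveS [P [_ SP]].
by apply: const_psh_sheaf_cond sieveS _; exists P, (sipp_proj G P X).
Qed.
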